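(* Let $G,H$ be non-discrete unimodular lcsc compactly generated groups and let $(\Omega,X_G,X_H,\mu)$ be a measure equivalence coupling between them satisfying properties (P1) and (P3) below. Then there is a constant $K'>0$ (independent of $f$ and $p$) such that for every $p\ge1$ and every $f\in\mathrm{L}^p(H)$ with support of finite measure, $$\int_{X_G}\|f_x\|_p^p\,d\nu_G(x)\ge K'\|f\|_p^p.$$
   Context: Measure equivalence coupling: measure space $(\Omega,\mu)$ with commuting measure-preserving $G$- and $H$-actions (written $\ast$), subsets $X_G,X_H$ with finite measures $\nu_G,\nu_H$ such that $(g,x)\mapsto g\ast x$ is a measure space isomorphism $(G\times X_G,\lambda_G\otimes\nu_G)\to(\Omega,\mu)$ and likewise for $H\times X_H$. Induced action: $g\cdot x$ is the unique point of $(H\ast g\ast x)\cap X_H$ ($g\in G,x\in X_H$), cocycle $\alpha(g,x)\ast g\ast x=g\cdot x$; symmetrically $H\curvearrowright X_G$ with cocycle $\beta$. $R^G_Y(x)=\{g: g\cdot x\in Y\}$, $R^H_Y(x)=\{h:h\cdot x\in Y\}$. (P1): there is $C>0$ with $\nu_G|_{X_G\cap X_H}=C\nu_H|_{X_G\cap X_H}$ and $\nu_G(X_G\cap X_H)>0$. (P3): for a.e. $x\in X_H$, $\alpha(\cdot,x)\colon(R^G_{X_G\cap X_H}(x),\lambda_G)\to(\alpha(R^G_{X_G\cap X_H}(x),x),\lambda_H)$ is measure preserving, and for a.e. $x\in X_G$, $\beta(\cdot,x)\colon(R^H_{X_G\cap X_H}(x),\lambda_H)\to(\beta(R^H_{X_G\cap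 X_H}(x),x),\lambda_G)$ is measure preserving. Given $f\colon H\to\mathbb{R}$, $\tilde f(h\ast x)=f(h^{-1})$ ($h\in H$, $x\in X_H$) and $f_x(g)=\tilde f(g\ast x)$ for $x\in X_G$, $g\in G$. *)

From HB Require Import structures.
From mathcomp Require Import all_boot all_order all_algebra.
From mathcomp Require Import all_classical all_reals all_analysis.
Set Implicit Arguments. Unset Strict Implicit. Unset Printing Implicit Defensive.
Import Order.TTheory GRing.Theory Num.Theory.
Local Open Scope classical_set_scope.
Local Open Scope ring_scope.

Notation Bor G := (g_sigma_algebraType (@open G)).

Definition is_group {T : Type} (mul : T -> T -> T) (one : T) (inv : T -> T) :=
  [/\ forall x y z, mul x (mul y z) = mul (mul x y) z,
      forall x, mul one x = x, forall x, mul x one = x,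
      forall x, mul (inv x) x = one & forall x, mul x (inv x) = one].

Definition topological_group (G : ptopologicalType)
  (mul : G -> G -> G) (one : G) (inv : G -> G) :=
  [/\ is_group mul one inv,
      continuous (fun p : G * G => mul p.1 p.2) & continuous inv].

Definition lcsc (G : ptopologicalType) :=
  [/\ locally_compact [set: G], hausdorff_space G & @second_countable G].

Definition generates {T : Type} (mul : T -> T -> T) (one : T) (inv : T -> T)
  (S : set T) :=
  forall U : set T, S `<=` U -> U one -> (forall x y, U x -> U y -> U (mul x y)) ->
    (forall x, U x -> U (inv x)) -> U = setT.

Definition compactly_generated (G : ptopologicalType)
  (mul : G -> G -> G) (one : G) (inv : G -> G) :=
  exists K : set G, compact K /\ generates mul one inv K.

Definition non_discrete (G : ptopologicalType) := ~ (forall x : G, open [set x]).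

(* lam is a Haar measure (nonzero, left-invariant, Radon) on the lcsc group G,
   and G is unimodular, i.e. lam is also right-invariant. *)
Definition unimodular_haar (R : realType) (G : ptopologicalType)
  (mul : G -> G -> G) (lam : {measure set (Bor G) -> \bar R}) :=
  [/\ forall g (A : set (Bor G)), measurable A -> lam [set x | A (mul g x)] = lam A,
      forall g (A : set (Bor G)), measurable A -> lam [set x | A (mul x g)] = lam A,
      forall K : set G, compact K -> (lam K < +oo)%E &
      forall U : set G, open U -> U !=set0 -> (0 < lam U)%E].

Definition mp_action (R : realType) (G : ptopologicalType)
  (mul : G -> G -> G) (one : G) d (Om : measurableType d)
  (mu : {measure set Om -> \bar R}) (act : G -> Om -> Om) :=
  [/\ measurable_fun setT (fun p : (Bor G * Om)%type => act p.1 p.2),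
      forall w, act one w = w,
      forall g1 g2 w, act (mul g1 g2) w = act g1 (act g2 w) &
      forall g (A : set Om), measurable A -> mu (act g @^-1` A) = mu A].

(* (g,x) |-> act g x is a measure space isomorphism
   (G x X, lam (x) nu) -> (Om, mu), with (measurable) inverse w |-> (pi w, rho w);
   nu is a finite measure on X (given as a measure on Om, only used on X). *)
Definition fund_iso (R : realType) (G : ptopologicalType) d (Om : measurableType d)
  (lam : {measure set (Bor G) -> \bar R}) (mu : {measure set Om -> \bar R})
  (act : G -> Om -> Om) (X : set Om) (nu : {measure set Om -> \bar R})
  (pi : Om -> G) (rho : Om -> Om) :=
  [/\ measurable X /\ (nu X < +oo)%E,
      measurable_fun setT (fun w : Om => ((pi w : Bor G), rho w)),
      forall w, X (rho w) /\ act (pi w) (rho w) = w,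
      forall g x, X x -> pi (act g x) = g /\ rho (act g x) = x &
      forall A : set Om, measurable A ->
        mu A = (lam \x nu)%E [set p : (Bor G * Om)%type | X p.2 /\ A (act p.1 p.2)]].

Definition propP1 (R : realType) d (Om : measurableType d)
  (XG XH : set Om) (nuG nuH : {measure set Om -> \bar R}) :=
  exists C : R, 0 < C /\
    (forall A : set Om, measurable A ->
        nuG (A `&` (XG `&` XH)) = (C%:E * nuH (A `&` (XG `&` XH)))%E) /\
    (0 < nuG (XG `&` XH))%E.

Definition mp_between (R : realType) d1 d2 (T1 : measurableType d1)
  (T2 : measurableType d2) (lam1 : {measure set T1 -> \bar R})
  (lam2 : {measure set T2 -> \bar R}) (A : set T1) (f : T1 -> T2) :=
  [/\ measurable A, measurable (f @` A), measurable_fun A f &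
      forall B : set T2, measurable B ->
        lam1 (A `&` f @^-1` B) = lam2 (B `&` f @` A)].

(* induced action g.x (for x in XH) and cocycle alpha(g,x), defined through the
   inverse (piH, rhoH) of (h,x) |-> h * x on H x XH:
   g * x = piH(g*x) * rhoH(g*x), so g.x = rhoH (g*x), alpha(g,x) = piH(g*x)^-1. *)
Definition ind_dot {G H Om : Type} (actG : G -> Om -> Om) (rhoH : Om -> Om)
  (g : G) (x : Om) := rhoH (actG g x).
Definition cocycle {G H Om : Type} (actG : G -> Om -> Om) (invH : H -> H)
  (piH : Om -> H) (g : G) (x : Om) := invH (piH (actG g x)).
Definition Rset {G H Om : Type} (actG : G -> Om -> Om) (rhoH : Om -> Om)
  (Y : set Om) (x : Om) : set G := [set g | Y (@ind_dot G H Om actG rhoH g x)].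

Definition propP3 (R : realType) (G H : ptopologicalType) d (Om : measurableType d)
  (invG : G -> G) (invH : H -> H)
  (lamG : {measure set (Bor G) -> \bar R}) (lamH : {measure set (Bor H) -> \bar R})
  (actG : G -> Om -> Om) (actH : H -> Om -> Om) (XG XH : set Om)
  (nuG nuH : {measure set Om -> \bar R})
  (piG : Om -> G) (rhoG : Om -> Om) (piH : Om -> H) (rhoH : Om -> Om) :=
  {ae nuH, forall x, XH x ->
     mp_between lamG lamH (@Rset G H Om actG rhoH (XG `&` XH) x)
       (fun g : Bor G => (@cocycle G H Om actG invH piH g x : Bor H))} /\
  {ae nuG, forall x, XG x ->
     mp_between lamH lamG (@Rset H G Om actH rhoG (XG `&` XH) x)
       (fun h : Bor H => (@cocycle H G Om actH invG piG h x : Bor G))}.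

(* tilde f (h * x) = f (h^-1) for h in H, x in XH *)
Definition ftilde {R H Om : Type} (invH : H -> H) (piH : Om -> H) (f : H -> R)
  (w : Om) : R := f (invH (piH w)).

From HB Require Import structures.
From mathcomp Require Import all_boot all_order all_algebra.
From mathcomp Require Import all_classical all_reals all_analysis.
From mathcomp Require Import measurable_realfun.
Set Implicit Arguments. Unset Strict Implicit. Unset Printing Implicit Defensive.
Import Order.TTheory GRing.Theory Num.Theory.
Local Open Scope classical_set_scope.
Local Open Scope ring_scope.

(* Decomposing the coupling along the G-fundamental domain, the left-hand side
   is the integral over Omega of F w := |f (piH w)^-1|^p.  Decomposing Omega
   along the H-fundamental domain instead, the same integral is
   int_{X_H} int_H |f (h^-1)|^p, and the Haar measure of the unimodular group H
   is inversion invariant, so this is nuH(X_H) * ||f||_p^p.  Hence the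
   inequality holds, with equality, for K' = nuH(X_H), which is positive by
   (P1). *)

Lemma open_measurable_Bor (T : ptopologicalType) (A : set T) :
  open A -> measurable (A : set (Bor T)).
Proof. exact: sub_gen_smallest. Qed.

Lemma closed_measurable_Bor (T : ptopologicalType) (A : set T) :
  closed A -> measurable (A : set (Bor T)).
Proof.
move=> cA; rewrite -(setCK A); apply: measurableC; apply: open_measurable_Bor.
by rewrite openC.
Qed.

Lemma continuous_measurable_Bor (T U : ptopologicalType) (f : T -> U) :
  continuous f -> measurable_fun setT (f : Bor T -> Bor U).
Proof.
move=> cf; apply: (@measurability _ _ (Bor T) (Bor U) setT f (@open U)) => //.
move=> _ [B oB <-].
by rewrite setTI; apply: open_measurable_Bor; move/continuousP: cf; apply.
Qed.

(* A second countable topology on the square is generated by products of basic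
   open sets, which are measurable rectangles. *)
Lemma second_countable_open_measurable_prod (T : ptopologicalType) :
  @second_countable T ->
  forall W : set (T * T), open W -> measurable (W : set (Bor T * Bor T)%type).
Proof.
move=> [B cB [Bo Bb]] W oW.
have [g gs] : exists g : nat -> set T, set_surj setT B g by move/pcard_surjP: cB.
pose F (p : set T * set T) : set (T * T) :=
  if `[< B p.1 /\ B p.2 /\ p.1 `*` p.2 `<=` W >] then p.1 `*` p.2 else set0.
have -> : W = \bigcup_n \bigcup_m F (g n, g m).
  apply/seteqP; split; last first.
    by move=> z [n _ [m _]]; rewrite /F; case: asboolP => [[_ [_]]|_] // /[apply].
  move=> [x y] Wxy.
  have [[P Q] /= [nP nQ] PQW] : nbhs (x, y) W by exact: open_nbhs_nbhs.
  have [U [BU Ux] UP] := Bb x P nP; have [V [BV Vy] VQ] := Bb y Q nQ.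
  have [n _ gn] := gs U BU; have [m _ gm] := gs V BV.
  exists n => //; exists m => //; rewrite /F /= gn gm.
  case: asboolP => // -[]; split => //; split => //.
  by move=> [a b] [/= Ua Vb]; apply: PQW; split; [exact: UP | exact: VQ].
apply: bigcupT_measurable => n; apply: bigcupT_measurable => m.
rewrite /F; case: asboolP => [[BU [BV _]]|_] //.
by apply: measurableX; apply: open_measurable_Bor; apply: Bo.
Qed.

Lemma continuous2_measurable_Bor (T : ptopologicalType) (op : T -> T -> T) :
  @second_countable T -> continuous (fun p : T * T => op p.1 p.2) ->
  measurable_fun setT (fun p : (Bor T * Bor T)%type => (op p.1 p.2 : Bor T)).
Proof.
move=> sc cop.
apply: (@measurability _ _ (Bor T * Bor T)%type (Bor T) setT _ (@open T)) => //.
move=> _ [B oB <-].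
rewrite setTI; apply: second_countable_open_measurable_prod => //.
by move/continuousP: cop; apply.
Qed.

Section RadonMeasure.
Context (R : realType) (T : ptopologicalType) (lam : {measure set (Bor T) -> \bar R}).
Hypotheses (lcscT : lcsc T)
  (lam_compact : forall K : set T, compact K -> (lam K < +oo)%E).

Lemma lcsc_basis_relatively_compact {B : set (set T)} : basis B ->
  forall x : T, exists V, [/\ B V, V x & exists2 K, compact K & V `<=` K].
Proof.
have [lc _ _] := lcscT; move=> [_ Bb] x.
have := lc x I; rewrite /= withinET => -[U nU [cU _]].
by have [V [BV Vx] VU] := Bb x U nU; exists V; split => //; exists U.
Qed.

Lemma relatively_compact_open_finite {V K : set T} :
  open V -> compact K -> V `<=` K -> (lam V < +oo)%E.
Proof.
have [_ hsT _] := lcscT; move=> oV cK VK.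
apply: (le_lt_trans _ (lam_compact cK)); apply: le_measure; rewrite ?inE //.
  exact: open_measurable_Bor.
by apply: closed_measurable_Bor; exact: compact_closed.
Qed.

Lemma lcsc_sigma_finite : sigma_finite setT lam.
Proof.
have [_ _ [B cB [Bo Bb]]] := lcscT.
have [g gs] : exists g : nat -> set T, set_surj setT B g by move/pcard_surjP: cB.
pose F n : set T :=
  if `[< B (g n) /\ exists2 K, compact K & g n `<=` K >] then g n else set0.
exists (fun n => F n : set (Bor T)).
  apply/seteqP; split => // x _.
  have [V [BV Vx [K cK VK]]] := lcsc_basis_relatively_compact (conj Bo Bb) x.
  have [n _ gn] := gs V BV; exists n => //; rewrite /F gn.
  by case: asboolP => // -[]; split => //; exists K.
move=> n; rewrite /F; case: asboolP => [[BV [K cK VK]]|_]; last first.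
  by rewrite measure0.
split; first by apply: open_measurable_Bor; exact: Bo.
exact: (relatively_compact_open_finite (Bo _ BV) cK VK).
Qed.

Lemma lcsc_exists_finite_positive_measure :
  (forall U : set T, open U -> U !=set0 -> (0 < lam U)%E) ->
  exists U : set (Bor T), [/\ measurable U, (0 < lam U)%E & (lam U < +oo)%E].
Proof.
have [_ _ [B _ [Bo Bb]]] := lcscT; move=> lam_open.
have [V [BV Vp [K cK VK]]] := lcsc_basis_relatively_compact (conj Bo Bb) point.
exists V; split; first by apply: open_measurable_Bor; exact: Bo.
  by apply: lam_open; [exact: Bo | exists point].
exact: (relatively_compact_open_finite (Bo _ BV) cK VK).
Qed.

End RadonMeasure.

Definition sfmeasure d (T : measurableType d) (R : realType)
  (m : {measure set T -> \bar R}) (_ : sigma_finite setT m) : set T -> \bar R := m.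

Section SigmaFiniteMeasure.
Context d (T : measurableType d) (R : realType) (m : {measure set T -> \bar R}).
Variable m_sf : sigma_finite setT m.
HB.instance Definition _ := Measure.on (sfmeasure m_sf).
HB.instance Definition _ := Measure_isSigmaFinite.Build _ _ _ (sfmeasure m_sf) m_sf.
End SigmaFiniteMeasure.

Section ProductSections.
Context d1 d2 (T1 : measurableType d1) (T2 : measurableType d2) (R : realType)
  (m1 : {sigma_finite_measure set T1 -> \bar R})
  (m2 : {sigma_finite_measure set T2 -> \bar R}).

Lemma integral_xsection_ysection (S : set (T1 * T2)) : measurable S ->
  (\int[m1]_x m2 (xsection S x) = \int[m2]_y m1 (ysection S y))%E.
Proof.
move=> mS; have := indic_fubini_tonelli m1 m2 mS.
by rewrite indic_fubini_tonelli_FE // indic_fubini_tonelli_GE.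
Qed.

Lemma integral_xsection_cst (S : set (T1 * T2)) (D : set T1) (c : \bar R) :
  measurable D -> (0 <= c)%E ->
  (forall x, D x -> m2 (xsection S x) = c) -> (forall x, ~ D x -> xsection S x = set0) ->
  (\int[m1]_x m2 (xsection S x) = c * m1 D)%E.
Proof.
move=> mD c0 SD SnD; rewrite -integral_cst // integral_mkcond.
apply: eq_integral => x _; rewrite /patch; case: ifPn => [/set_mem/SD //|].
by move=> /negP Dx; rewrite SnD ?measure0 // => /mem_set.
Qed.

End ProductSections.

Lemma group_invM {T : Type} (mul : T -> T -> T) (one : T) (inv : T -> T) :
  is_group mul one inv -> forall a b, inv (mul a b) = mul (inv b) (inv a).
Proof.
move=> [mA m1 m1' mV mV'] a b.
have e : mul (mul a b) (mul (inv b) (inv a)) = one.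
  by rewrite -mA [mul b _]mA mV' m1 mV'.
by rewrite -[LHS]m1' -e mA mV m1.
Qed.

Lemma powR_norm_measurable d (T : measurableType d) (R : realType) (p : R)
  (f : T -> R) : measurable_fun setT f ->
  measurable_fun setT (fun x => (powR `|f x| p)%:E).
Proof.
move=> mf; apply/measurable_EFinP/(measurableT_comp (measurable_powR p)).
exact: measurableT_comp mf.
Qed.

Section HaarInversion.
Context (R : realType) (H : ptopologicalType) (mul : H -> H -> H) (one : H)
  (inv : H -> H) (lam : {measure set (Bor H) -> \bar R}).
Hypotheses (H_group : is_group mul one inv)
  (mul_mfun : measurable_fun setT (fun p : (Bor H * Bor H)%type => (mul p.1 p.2 : Bor H)))
  (inv_mfun : measurable_fun setT (inv : Bor H -> Bor H))
  (lam_left : forall g (A : set (Bor H)), measurable A -> lam [set x | A (mul g x)] = lam A)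
  (lam_right : forall g (A : set (Bor H)), measurable A -> lam [set x | A (mul x g)] = lam A)
  (lam_sf : sigma_finite setT lam)
  (lam_nontrivial : exists B : set (Bor H),
     [/\ measurable B, (0 < lam B)%E & (lam B < +oo)%E]).

Let lam' : {sigma_finite_measure set (Bor H) -> \bar R} := sfmeasure lam_sf.

Let preimage_measurable {f : (Bor H * Bor H)%type -> Bor H} {A : set (Bor H)} :
  measurable_fun setT f -> measurable A -> measurable (f @^-1` A).
Proof. by move=> mf mA; rewrite -[_ @^-1` _]setTI; apply: mf. Qed.

Let mulinv_mfun :
  measurable_fun setT (fun p : (Bor H * Bor H)%type => (mul p.1 (inv p.2) : Bor H)).
Proof.
rewrite (_ : (fun p => _) = (fun p : (Bor H * Bor H)%type => (mul p.1 p.2 : Bor H))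
  \o (fun p : (Bor H * Bor H)%type => (p.1, (inv p.2 : Bor H)))) //.
apply: (measurableT_comp mul_mfun); apply: measurable_fun_pair; first exact: measurable_fst.
exact: measurableT_comp inv_mfun measurable_snd.
Qed.

(* Weil's argument: compute the lam x lam measure of
   {(x, y) | A x, B (x y)} by integrating its sections in both orders, and
   right-translate the y-sections to those of {(x, y) | B x, A (x y^-1)}. *)
Lemma haar_inv (A : set (Bor H)) : measurable A -> lam (inv @^-1` A) = lam A.
Proof.
move=> mA; have [mulA mul1 mul1' mulV mulV'] := H_group.
have [B [mB B_gt0 B_fin]] := lam_nontrivial.
pose S1 := [set p : (Bor H * Bor H)%type | A p.1 /\ B (mul p.1 p.2)].
pose S2 := [set p : (Bor H * Bor H)%type | B p.1 /\ A (mul p.1 (inv p.2))].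
have mS1 : measurable S1.
  apply: measurableI; first exact: preimage_measurable measurable_fst mA.
  exact: preimage_measurable mul_mfun mB.
have mS2 : measurable S2.
  apply: measurableI; first exact: preimage_measurable measurable_fst mB.
  exact: preimage_measurable mulinv_mfun mA.
have S1_xsections : (\int[lam']_x lam' (xsection S1 x) = lam B * lam A)%E.
  apply: integral_xsection_cst => // [x Ax|x nAx].
    rewrite /= /sfmeasure -(lam_left x mB); congr (lam _).
    by apply/seteqP; split => y; rewrite /xsection /= inE /=; [case | split].
  by apply/seteqP; split => y //; rewrite /xsection /= inE => -[].
have S2_xsections :
    (\int[lam']_x lam' (xsection S2 x) = lam (inv @^-1` A) * lam B)%E.
  apply: integral_xsection_cst => // [x Bx|x nBx].
    rewrite /= /sfmeasure -(lam_right x (measurable_xsection x mS2)).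
    congr (lam _); apply/seteqP; split => z; rewrite /xsection /= !inE /=.
      by move=> [_]; rewrite (group_invM H_group) mulA mulV' mul1.
    by move=> Az; split => //; rewrite (group_invM H_group) mulA mulV' mul1.
  by apply/seteqP; split => y //; rewrite /xsection /= inE => -[].
have S12_ysections y : lam' (ysection S1 y) = lam' (ysection S2 y).
  rewrite /= /sfmeasure -(lam_right (inv y) (measurable_ysection y mS1)).
  congr (lam _); apply/seteqP; split => x; rewrite /ysection /= !inE /=.
    by move=> [Ax Bx]; split => //; rewrite -mulA mulV mul1' in Bx.
  by move=> [Bx Ax]; split => //; rewrite -mulA mulV mul1'.
have := integral_xsection_ysection lam' lam' mS1.
rewrite S1_xsections; under eq_integral => y _ do rewrite S12_ysections.
rewrite -(integral_xsection_ysection lam' lam' mS2) S2_xsections => e.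
have B_fin_num : lam B \is a fin_num by rewrite ge0_fin_numE.
by apply: (inc_inj (lee_pmul2l B_fin_num B_gt0)); rewrite /= muleC -e.
Qed.

Lemma haar_inv_integral (g : Bor H -> \bar R) : measurable_fun setT g ->
  (forall x, 0 <= g x)%E -> (\int[lam]_x g (inv x) = \int[lam]_x g x)%E.
Proof.
move=> mg g0.
rewrite [RHS](eq_measure_integral (pushforward lam (inv : Bor H -> Bor H))).
  by rewrite (ge0_integral_pushforward inv_mfun).
by move=> A mA _; rewrite /pushforward; symmetry; exact: haar_inv.
Qed.

End HaarInversion.

Section FundamentalDomain.
Context (R : realType) (G : ptopologicalType) d (Om : measurableType d)
  (lam : {measure set (Bor G) -> \bar R}) (mu nu : {measure set Om -> \bar R})
  (act : G -> Om -> Om) (X : set Om) (pi : Om -> G) (rho : Om -> Om).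
Hypotheses (lam_sf : sigma_finite setT lam)
  (act_mfun : measurable_fun setT (fun p : (Bor G * Om)%type => act p.1 p.2))
  (fi : fund_iso lam mu act X nu pi rho).

Let mX : measurable X. Proof. by case: fi => -[]. Qed.

Let nuX_sf : sigma_finite setT (mrestr nu mX).
Proof.
have [[_ nuX_fin] _ _ _ _] := fi.
apply: fin_num_fun_sigma_finite; first by rewrite /mrestr set0I measure0.
move=> U mU; rewrite ge0_fin_numE ?measure_ge0 // /mrestr.
by apply: le_lt_trans nuX_fin; apply: le_measure; rewrite ?inE //; exact: measurableI.
Qed.

Let lam' : {sigma_finite_measure set (Bor G) -> \bar R} := sfmeasure lam_sf.
Let nuX : {sigma_finite_measure set Om -> \bar R} := sfmeasure nuX_sf.
Let Phi (w : Om) : (Bor G * Om)%type := ((pi w : Bor G), rho w).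

Lemma fund_iso_pushforward (S : set (Bor G * Om)%type) : measurable S ->
  S `<=` [set p | X p.2] -> (lam' \x nuX)%E S = pushforward mu Phi S.
Proof.
have [_ mPhi _ act_cancel muE] := fi; move=> mS SX.
rewrite /pushforward muE; last by rewrite -[_ @^-1` _]setTI; exact: mPhi.
rewrite /product_measure1; apply: eq_integral => g _; rewrite /= /sfmeasure /mrestr.
congr (nu _); apply/seteqP; split => x; rewrite /xsection /= !inE.
  move=> [Sgx Xx]; split => //.
  by rewrite /Phi /= (act_cancel _ _ Xx).1 (act_cancel _ _ Xx).2.
by move=> [Xx]; rewrite /Phi /= (act_cancel _ _ Xx).1 (act_cancel _ _ Xx).2.
Qed.

Lemma fund_iso_integral (F : Om -> \bar R) : measurable_fun setT F ->
  (forall w, 0 <= F w)%E ->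
  (\int[mu]_w F w = \int[nu]_(x in X) \int[lam]_g F (act g x))%E.
Proof.
have [_ mPhi act_decomp act_cancel _] := fi; move=> mF F0.
pose Xp : set (Bor G * Om)%type := [set p | X p.2].
have mXp : measurable Xp by rewrite /Xp -[X in measurable X]setTI; exact: measurable_snd.
pose FX := (F \o (fun p : (Bor G * Om)%type => act p.1 p.2)) \_ Xp.
have mFX : measurable_fun setT FX.
  apply/(measurable_restrictT _ mXp).
  exact: measurable_funS (measurableT_comp mF act_mfun).
have FX0 p : (0 <= FX p)%E by rewrite /FX /patch; case: ifPn => _ //; exact: F0.
have -> : (\int[mu]_w F w = \int[pushforward mu Phi]_p FX p)%E.
  rewrite (ge0_integral_pushforward mPhi) //; apply: eq_integral => w _.
  have [Xr e] := act_decomp w.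
  by rewrite /FX /patch /Phi /= (mem_set (Xr : Xp (pi w, rho w))) e.
rewrite -integral_mkcond.
rewrite (eq_measure_integral (lam' \x nuX)%E); last first.
  by move=> S mS SX; symmetry; exact: fund_iso_pushforward.
rewrite integral_mkcond (fubini_tonelli2 _ mFX FX0).
transitivity (\int[nuX]_(y in X) fubini_G lam' FX y)%E.
  rewrite [RHS]integral_mkcond; apply: eq_integral => y _.
  rewrite /patch; case: ifPn => // yX.
  apply: integral0_eq => x _; rewrite /FX /patch memNset //.
  by move=> Xy; move/negP: yX; apply; rewrite inE.
rewrite [LHS](eq_measure_integral nu); last first.
  by move=> A mA AX; exact: (congr1 nu (setIidl AX)).
apply: eq_integral => y /[!inE] Xy; apply: eq_integral => x _.
by rewrite /FX /patch ifT // inE.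
Qed.

End FundamentalDomain.

Lemma fund_iso_pi_measurable (R : realType) (G : ptopologicalType) d
  (Om : measurableType d) (lam : {measure set (Bor G) -> \bar R})
  (mu nu : {measure set Om -> \bar R}) (act : G -> Om -> Om) (X : set Om)
  (pi : Om -> G) (rho : Om -> Om) :
  fund_iso lam mu act X nu pi rho -> measurable_fun setT (pi : Om -> Bor G).
Proof.
move=> [_ mPhi _ _ _].
by rewrite (_ : pi = fst \o (fun w => ((pi w : Bor G), rho w))) //; exact: measurableT_comp.
Qed.

Lemma propP1_gt0 (R : realType) d (Om : measurableType d) (XG XH : set Om)
  (nuG nuH : {measure set Om -> \bar R}) :
  measurable XG -> measurable XH -> propP1 XG XH nuG nuH -> (0 < nuH XH)%E.
Proof.
move=> mXG mXH [C [C_gt0 [nuGE nuG_gt0]]].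
have mXGH : measurable (XG `&` XH) by exact: measurableI.
apply: (@lt_le_trans _ _ (nuH (XG `&` XH))); last first.
  by apply: le_measure; rewrite ?inE.
rewrite lt0e measure_ge0 andbT; apply/eqP => nuH0.
by move: nuG_gt0; rewrite -[XG `&` XH]setTI nuGE // setTI nuH0 mule0 ltxx.
Qed.

Theorem mainTheorem10 (R : realType) (G H : ptopologicalType)
  (mulG : G -> G -> G) (oneG : G) (invG : G -> G)
  (mulH : H -> H -> H) (oneH : H) (invH : H -> H)
  (lamG : {measure set (Bor G) -> \bar R}) (lamH : {measure set (Bor H) -> \bar R})
  (d : measure_display) (Om : measurableType d) (mu : {measure set Om -> \bar R})
  (actG : G -> Om -> Om) (actH : H -> Om -> Om) (XG XH : set Om)
  (nuG nuH : {measure set Om -> \bar R})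
  (piG : Om -> G) (rhoG : Om -> Om) (piH : Om -> H) (rhoH : Om -> Om) :
  topological_group mulG oneG invG -> lcsc G ->
  compactly_generated mulG oneG invG -> non_discrete G ->
  unimodular_haar mulG lamG ->
  topological_group mulH oneH invH -> lcsc H ->
  compactly_generated mulH oneH invH -> non_discrete H ->
  unimodular_haar mulH lamH ->
  mp_action mulG oneG mu actG -> mp_action mulH oneH mu actH ->
  (forall g h w, actG g (actH h w) = actH h (actG g w)) ->
  fund_iso lamG mu actG XG nuG piG rhoG ->
  fund_iso lamH mu actH XH nuH piH rhoH ->
  propP1 XG XH nuG nuH ->
  propP3 invG invH lamG lamH actG actH XG XH nuG nuH piG rhoG piH rhoH ->
  exists K' : R, 0 < K' /\
    forall p : R, 1 <= p ->
    forall f : H -> R, measurable_fun setT (f : Bor H -> R) ->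
      (\int[lamH]_h (powR `|f h| p)%:E < +oo)%E ->
      (lamH [set h : Bor H | f h != 0%R] < +oo)%E ->
      (K'%:E * \int[lamH]_h (powR `|f h| p)%:E
        <= \int[nuG]_(x in XG)
             \int[lamG]_g (powR `|ftilde invH piH f (actG g x)| p)%:E)%E.
Proof.
move=> _ lcscG _ _ [_ _ lamG_cpt _] [grpH mulH_cont invH_cont] lcscH _ _.
move=> [lamH_left lamH_right lamH_cpt lamH_open] [actG_mfun _ _ _] [actH_mfun _ _ _].
move=> _ fiG fiH P1 _.
have [[mXG _] _ _ _ _] := fiG; have [[mXH nuH_fin] _ _ actH_cancel _] := fiH.
have nuH_gt0 := propP1_gt0 mXG mXH P1.
exists (fine (nuH XH)); split; first by apply: fine_gt0; rewrite nuH_gt0 nuH_fin.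
move=> p _ f mf _ _.
pose g (h : Bor H) := (powR `|f h| p)%:E.
have mg : measurable_fun setT g := powR_norm_measurable p mf.
have g0 h : (0 <= g h)%E by rewrite lee_fin powR_ge0.
have invH_mfun := continuous_measurable_Bor invH_cont.
pose F w := g (invH (piH w)).
have mF : measurable_fun setT F.
  exact: measurableT_comp mg (measurableT_comp invH_mfun (fund_iso_pi_measurable fiH)).
have F0 w : (0 <= F w)%E by exact: g0.
have -> : (\int[nuG]_(x in XG)
    \int[lamG]_g (powR `|ftilde invH piH f (actG g x)| p)%:E = \int[mu]_w F w)%E.
  by rewrite (fund_iso_integral (lcsc_sigma_finite lcscG lamG_cpt) actG_mfun fiG mF F0).
rewrite (fund_iso_integral (lcsc_sigma_finite lcscH lamH_cpt) actH_mfun fiH mF F0).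
have [_ _ scH] := lcscH.
have haar_invH := haar_inv_integral grpH (continuous2_measurable_Bor scH mulH_cont)
  invH_mfun lamH_left lamH_right (lcsc_sigma_finite lcscH lamH_cpt)
  (lcsc_exists_finite_positive_measure lcscH lamH_cpt lamH_open) mg g0.
have -> : (\int[nuH]_(y in XH) \int[lamH]_h F (actH h y) =
    \int[nuH]_(y in XH) cst (\int[lamH]_h g h) y)%E.
  apply: eq_integral => y /[!inE] XHy; rewrite /= -haar_invH.
  by apply: eq_integral => h _; rewrite /F (actH_cancel _ _ XHy).1.
have nuH_fin_num : nuH XH \is a fin_num by rewrite ge0_fin_numE.
by rewrite integral_cst // (fineK nuH_fin_num) muleC.
Qed.
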